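(* Let $n\ge 2$ and $m\ge1$ be integers, and let $t,s,r\in\mathbb{Z}_n$ with $t,r$ units of $\mathbb{Z}_n$ and $s^2=(1-tr)s$ in $\mathbb{Z}_n$. Let $X=(\mathbb{Z}_n)^m$ and $B(x,y)=(ty+sx,\,rx)$. Then the birack rank of $(X,B)$ is the smallest integer $N>0$ such that $(tr+s)^N=1$ in $\mathbb{Z}_n$.
   Context: Let $X$ be a set. A map $B:X\times X\to X\times X$, written $B=(B_1,B_2)$, is strongly invertible if: (i) $B$ is a bijection; (ii) there is a unique invertible map $S:X\times X\to X\times X$ (the sideways map) with $S(B_1(x,y),x)=(B_2(x,y),y)$ for all $x,y$; (iii) writing $S=(S_1,S_2)$, $S^{-1}=(S^{-1}_1,S^{-1}_2)$ and $\Delta(x)=(x,x)$, each of $S_1\circ\Delta$, $S_2\circ\Delta$, $S^{-1}_1\circ\Delta$, $S^{-1}_2\circ\Delta$ is a bijection $X\to X$. A birack is a pair $(X,B)$ with $B$ strongly invertible satisfying the set-theoretic Yang–Baxter equation $(B\times\mathrm{Id})(\mathrm{Id}\times B)(B\times\mathrm{Id})=(\mathrm{Id}\times B)(B\times\mathrm{Id})(\mathrm{Id}\times B)$. Its kink map is $\pi=S^{-1}_1\circ\Delta\circ(S^{-1}_2\circ\Delta)^{-1}$. The birack rank is the smallest positive integer $N$ with $\pi^N(x)=x$ for all $x\in X$. *)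

From HB Require Import structures.
From mathcomp Require Import all_boot all_order all_algebra.
Set Implicit Arguments. Unset Strict Implicit. Unset Printing Implicit Defensive.
Import GRing.Theory.

Section Birack.
Variable X : Type.

Definition sideways_for (B S : X * X -> X * X) : Prop :=
  forall x y, S ((B (x, y)).1, x) = ((B (x, y)).2, y).

Definition strongly_invertible (B : X * X -> X * X) : Prop :=
  bijective B /\
  exists S Sinv : X * X -> X * X,
    cancel S Sinv /\ cancel Sinv S /\ sideways_for B S /\
    (forall S', bijective S' -> sideways_for B S' -> S' =1 S) /\
    bijective (fun x => (S (x, x)).1) /\ bijective (fun x => (S (x, x)).2) /\
    bijective (fun x => (Sinv (x, x)).1) /\ bijective (fun x => (Sinv (x, x)).2).

Definition BxId (B : X * X -> X * X) (p : X * X * X) : X * X * X :=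
  let: (x, y, z) := p in ((B (x, y)).1, (B (x, y)).2, z).

Definition IdxB (B : X * X -> X * X) (p : X * X * X) : X * X * X :=
  let: (x, y, z) := p in (x, (B (y, z)).1, (B (y, z)).2).

Definition set_YBE (B : X * X -> X * X) : Prop :=
  forall p, BxId B (IdxB B (BxId B p)) = IdxB B (BxId B (IdxB B p)).

Definition birack (B : X * X -> X * X) : Prop :=
  strongly_invertible B /\ set_YBE B.

(* pi is the kink map S^{-1}_1 o Delta o (S^{-1}_2 o Delta)^{-1},
   characterized by pi o (S^{-1}_2 o Delta) = S^{-1}_1 o Delta. *)
Definition is_kink_map (B : X * X -> X * X) (pi : X -> X) : Prop :=
  exists S Sinv : X * X -> X * X,
    [/\ cancel S Sinv, cancel Sinv S, sideways_for B S
      & forall x, pi (Sinv (x, x)).2 = (Sinv (x, x)).1].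

Definition is_birack_rank (pi : X -> X) (N : nat) : Prop :=
  [/\ (0 < N)%N, iter N pi =1 id
    & forall k, (0 < k)%N -> iter k pi =1 id -> (N <= k)%N].
End Birack.

Definition is_min_pow_one (R : pzRingType) (a : R) (N : nat) : Prop :=
  [/\ (0 < N)%N, (a ^+ N = 1)%R
    & forall k, (0 < k)%N -> (a ^+ k = 1)%R -> (N <= k)%N].

Definition affB (n m : nat) (t s r : 'Z_n)
  (p : 'rV['Z_n]_m * 'rV['Z_n]_m) : 'rV['Z_n]_m * 'rV['Z_n]_m :=
  (t *: p.2 + s *: p.1, r *: p.1)%R.

(** For [B(x,y) = (t y + s x, r x)] the sideways map is forced to be
    [S(u,v) = (r v, t^-1 (u - s v))], with inverse
    [S^-1(u,v) = (t v + (s/r) u, r^-1 u)].  Hence [S^-1 o Delta] sends [x] to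
    [((t + s/r) x, r^-1 x)] and the kink map is multiplication by the scalar
    [c = t r + s]; its [N]-th power is the identity of [(Z_n)^m] exactly when
    [c^N = 1].  The relation [s^2 = (1 - t r) s] gives the Yang-Baxter equation
    and makes [1 - s] and [t r + s] units, so every diagonal component of [S]
    and [S^-1] is multiplication by a unit. *)

From HB Require Import structures.
From mathcomp Require Import all_boot all_order all_algebra.
Set Implicit Arguments. Unset Strict Implicit. Unset Printing Implicit Defensive.
Import GRing.Theory.
Local Open Scope ring_scope.

Section QuadraticRelation.
Variables (R : comUnitRingType) (w s : R).
Hypotheses (hw : w \is a GRing.unit) (hs : s ^+ 2 = (1 - w) * s).

Lemma mul1Bs_1DVs : (1 - s) * (1 + w^-1 * s) = 1.
Proof.
rewrite mulrBl mul1r mulrDr mulr1 mulrCA -expr2 hs mulrA mulrBr mulr1 mulVr //.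
by rewrite mulrBl mul1r (addrC s) subrK addrK.
Qed.

Lemma unit1Bs : (1 - s) \is a GRing.unit.
Proof. by apply/unitrPr; exists (1 + w^-1 * s); exact: mul1Bs_1DVs. Qed.

Lemma unitDs : (w + s) \is a GRing.unit.
Proof.
have -> : w + s = w * (1 + w^-1 * s) by rewrite mulrDr mulr1 mulVKr.
rewrite unitrM hw; apply/unitrPr; exists (1 - s).
by rewrite mulrC mul1Bs_1DVs.
Qed.

End QuadraticRelation.

Section UnitScaling.
Variables (R : unitRingType) (V : lmodType R) (a : R).
Hypothesis ha : a \is a GRing.unit.

Lemma scaler_unitK : cancel ( *:%R a : V -> V) ( *:%R a^-1).
Proof. by move=> v; rewrite scalerA mulVr // scale1r. Qed.

Lemma scaler_unitKV : cancel ( *:%R a^-1 : V -> V) ( *:%R a).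
Proof. by move=> v; rewrite scalerA mulrV // scale1r. Qed.

Lemma scaler_unit_bij : bijective ( *:%R a : V -> V).
Proof. exact: Bijective scaler_unitK scaler_unitKV. Qed.

End UnitScaling.

Lemma iter_scaler (R : pzRingType) (V : lmodType R) (f : V -> V) (c : R) :
  f =1 *:%R c -> forall k, iter k f =1 *:%R (c ^+ k).
Proof.
move=> fE; elim=> [|k IHk] v /=; first by rewrite scale1r.
by rewrite fE IHk scalerA exprS.
Qed.

Lemma scaler_rV_id (R : pzRingType) (m : nat) (a : R) : (0 < m)%N ->
  (forall v : 'rV[R]_m, a *: v = v) <-> a = 1.
Proof.
move=> m_gt0; split=> [aE | -> v]; last exact: scale1r.
have := congr1 (fun v : 'rV[R]_m => v 0 (Ordinal m_gt0)) (aE (const_mx 1)).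
by rewrite /= !mxE mulr1.
Qed.

Section AffineBirack.
Variables (R : comUnitRingType) (V : lmodType R) (t s r : R).
Hypotheses (ht : t \is a GRing.unit) (hr : r \is a GRing.unit).
Hypothesis hs : s ^+ 2 = (1 - t * r) * s.

Definition affine_br (p : V * V) : V * V := (t *: p.2 + s *: p.1, r *: p.1).

Definition affine_sideways (p : V * V) : V * V :=
  (r *: p.2, t^-1 *: (p.1 - s *: p.2)).

Definition affine_sideways_inv (p : V * V) : V * V :=
  (t *: p.2 + (s / r) *: p.1, r^-1 *: p.1).

Lemma affine_br_bij : bijective affine_br.
Proof.
exists (fun p : V * V => (r^-1 *: p.2, t^-1 *: (p.1 - (s / r) *: p.2))).
  case=> x y; rewrite /affine_br /= !scalerA mulVr // scale1r mulrVK //.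
  by rewrite addrK scaler_unitK.
by case=> u v; rewrite /affine_br /= !scalerA !mulrV // !scale1r subrK.
Qed.

Lemma affine_sidewaysK : cancel affine_sideways affine_sideways_inv.
Proof.
case=> u v; rewrite /affine_sideways /affine_sideways_inv /= scaler_unitKV //.
by rewrite scalerA mulrVK // subrK scaler_unitK.
Qed.

Lemma affine_sideways_invK : cancel affine_sideways_inv affine_sideways.
Proof.
case=> u v; rewrite /affine_sideways /affine_sideways_inv /= scaler_unitKV //.
by rewrite scalerA addrK scaler_unitK.
Qed.

Lemma affine_sideways_for : sideways_for affine_br affine_sideways.
Proof. by move=> x y; rewrite /affine_sideways /= addrK scaler_unitK. Qed.

Lemma sideways_for_affine_uniq S :
  sideways_for affine_br S -> S =1 affine_sideways.
Proof.
move=> hS [u v]; have := hS v (t^-1 *: (u - s *: v)).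
by rewrite /affine_br /= scaler_unitKV // subrK => ->.
Qed.

Lemma affine_br_YBE : set_YBE affine_br.
Proof.
case=> [[x y] z]; rewrite /BxId /IdxB /affine_br /= !scalerDr !scalerA.
have tsr_s : t * s * r + s * s = s.
  by rewrite -expr2 hs mulrBl mul1r mulrAC (mulrC (t * r)) addrC subrK.
have tsr_sx : (t * s * r) *: x + (s * s) *: x = s *: x by rewrite -scalerDl tsr_s.
rewrite (mulrC r t) (mulrC r s) (mulrC s t) -!addrA.
by rewrite [X in _ *: z + X]addrCA tsr_sx.
Qed.

Lemma affine_sideways_diag x :
  affine_sideways (x, x) = (r *: x, (t^-1 * (1 - s)) *: x).
Proof. by rewrite /affine_sideways /= -scalerA scalerBl scale1r. Qed.

Lemma affine_sideways_inv_diag x :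
  affine_sideways_inv (x, x) = (((t * r + s) / r) *: x, r^-1 *: x).
Proof. by rewrite /affine_sideways_inv /= -scalerDl mulrDl mulrK. Qed.

Lemma affine_br_birack : birack affine_br.
Proof.
split; last exact: affine_br_YBE.
split; first exact: affine_br_bij.
exists affine_sideways, affine_sideways_inv.
split; first exact: affine_sidewaysK.
split; first exact: affine_sideways_invK.
split; first exact: affine_sideways_for.
split; first by move=> S _; apply: sideways_for_affine_uniq.
have htr : t * r \is a GRing.unit by rewrite unitrM ht hr.
split; first exact: scaler_unit_bij.
split.
  apply: (eq_bij (f := *:%R (t^-1 * (1 - s)))) => [|x];
    last by rewrite affine_sideways_diag.
  by apply: scaler_unit_bij; rewrite unitrM unitrV ht (unit1Bs htr).
split.
  apply: (eq_bij (f := *:%R ((t * r + s) / r))) => [|x];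
    last by rewrite affine_sideways_inv_diag.
  by apply: scaler_unit_bij; rewrite unitrM unitrV hr unitDs.
by apply: scaler_unit_bij; rewrite unitrV.
Qed.

Lemma affine_kink : is_kink_map affine_br ( *:%R (t * r + s)).
Proof.
exists affine_sideways, affine_sideways_inv; split.
- exact: affine_sidewaysK.
- exact: affine_sideways_invK.
- exact: affine_sideways_for.
by move=> x; rewrite affine_sideways_inv_diag /= scalerA.
Qed.

Lemma affine_kinkE pi : is_kink_map affine_br pi -> pi =1 *:%R (t * r + s).
Proof.
case=> S [Sinv [SK SinvK side_S piE]].
have SinvE p : Sinv p = affine_sideways_inv p.
  apply: (can_inj affine_sidewaysK).
  by rewrite -(sideways_for_affine_uniq side_S) SinvK affine_sideways_invK.
move=> v; have := piE (r *: v).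
by rewrite !SinvE affine_sideways_inv_diag /= scaler_unitK // scalerA mulrVK.
Qed.

End AffineBirack.

Lemma birack_rank_min_pow (R : pzRingType) (X : Type) (pi : X -> X) (c : R) :
  (forall k, iter k pi =1 id <-> c ^+ k = 1) ->
  forall N, is_birack_rank pi N <-> is_min_pow_one c N.
Proof.
move=> iterE N; split=> -[N_gt0 powN minN]; split=> // [|k k_gt0 /iterE];
  by [apply/iterE | apply: minN].
Qed.

Theorem mainTheorem5 (n m : nat) (t s r : 'Z_n)
  (hn : (1 < n)%N) (hm : (0 < m)%N)
  (ht : t \is a GRing.unit) (hr : r \is a GRing.unit)
  (hs : s ^+ 2 = (1 - t * r) * s) :
  birack (@affB n m t s r) /\
  (exists pi, is_kink_map (@affB n m t s r) pi) /\
  (forall pi, is_kink_map (@affB n m t s r) pi ->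
     forall N : nat, is_birack_rank pi N <-> is_min_pow_one (t * r + s) N).
Proof.
split; first exact: affine_br_birack.
split; first by exists ( *:%R (t * r + s)); apply: affine_kink.
move=> pi kink_pi; apply: birack_rank_min_pow => k.
have iter_pi := iter_scaler (affine_kinkE ht hr kink_pi) k.
apply: iff_trans (scaler_rV_id _ hm).
by split=> idk v; [rewrite -iter_pi | rewrite iter_pi]; apply: idk.
Qed.
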